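(* For every positive integer $n$, $$(\sigma\ast\delta)(n)=\tfrac12\,(\mathbf 1\ast \tau\delta)(n),$$ where $\tau\delta$ is the pointwise product.
   Context: The arithmetic derivative $\delta$ is defined by $\delta(p)=1$ for every prime $p$ and $\delta(mn)=m\delta(n)+n\delta(m)$ for all positive integers $m,n$; equivalently $\delta(1)=0$ and $\delta(n)=n\sum_{p^\alpha\| n}\alpha/p$. $\mathbf 1(n)=1$ for all $n$, $\sigma(n)$ is the sum of the positive divisors of $n$, $\tau(n)$ is the number of positive divisors of $n$. The Dirichlet convolution is $(u\ast v)(n)=\sum_{d\mid n}u(d)v(n/d)$. *)

From mathcomp Require Import all_boot all_order all_algebra.
Set Implicit Arguments. Unset Strict Implicit. Unset Printing Implicit Defensive.

(* Arithmetic derivative: delta(n) = n * sum_{p^a || n} a/p, delta(1) = 0.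
   Written without division as sum_{p | n prime} logn p n * (n / p). *)
Definition arith_deriv (n : nat) : nat :=
  \sum_(p <- primes n) logn p n * (n %/ p).

Definition sigma (n : nat) : nat := \sum_(d <- divisors n) d.
Definition tau (n : nat) : nat := size (divisors n).

Definition dconv (u v : nat -> rat) (n : nat) : rat :=
  (\sum_(d <- divisors n) u d * v (n %/ d)%N)%R.

Definition one_fn : nat -> rat := fun _ => 1%R.

From mathcomp Require Import all_boot all_order all_algebra.
Set Implicit Arguments. Unset Strict Implicit. Unset Printing Implicit Defensive.
Import GRing.Theory Num.Theory.
Local Open Scope ring_scope.

(* Write [L n = delta(n)/n = sum_{p^a || n} a/p] for the
   logarithmic derivative; it is additive, [L (a b) = L a + L b].
   1. For [m > 0], [(id * delta)(m) = sum_{e | m} e (m/e) L(m/e)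
      = m sum_{d | m} L d], and pairing [d] with [m/d] gives
      [2 sum_{d | m} L d = sum_{d | m} L m = tau(m) L m]; hence
      [(id * delta)(m) = tau(m) delta(m) / 2].
   2. [sigma = 1 * id], and Dirichlet convolution is associative, so
      [sigma * delta = 1 * (id * delta) = 1/2 (1 * tau delta)]. *)

Lemma divisor_compl_gt0 (n d : nat) : (0 < n)%N -> (d %| n)%N -> (0 < n %/ d)%N.
Proof. by move=> n_gt0 dn; rewrite divn_gt0 ?(dvdn_gt0 n_gt0 dn) // dvdn_leq. Qed.

Section DivisorSums.

Variables (V : nmodType) (n : nat).
Hypothesis n_gt0 : (0 < n)%N.

Lemma divnK_divisor {d : nat} : (d %| n)%N -> (n %/ (n %/ d))%N = d.
Proof. by move=> dn; rewrite divnA // mulKn. Qed.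

Lemma sum_divisors_compl (F : nat -> V) :
  \sum_(d <- divisors n) F (n %/ d)%N = \sum_(d <- divisors n) F d.
Proof.
rewrite -(big_map (fun d => n %/ d)%N xpredT); apply: perm_big; apply: uniq_perm.
- rewrite map_inj_in_uniq ?divisors_uniq // => x y.
  rewrite -!dvdn_divisors // => xn yn nx_ny.
  by rewrite -(divnK_divisor xn) nx_ny divnK_divisor.
- exact: divisors_uniq.
move=> d; apply/mapP/idP => [[e] | ].
  by rewrite -!dvdn_divisors // => /dvdn_div en ->.
rewrite -dvdn_divisors // => dn; exists (n %/ d)%N; last by rewrite divnK_divisor.
by rewrite -dvdn_divisors // dvdn_div.
Qed.

Lemma sum_divisors_of_divisor (d : nat) (F : nat -> V) : (d %| n)%N ->
  \sum_(e <- divisors d) F e = \sum_(e <- divisors n | (e %| d)%N) F e.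
Proof.
move=> dn; have d_gt0 : (0 < d)%N := dvdn_gt0 n_gt0 dn.
rewrite -[RHS]big_filter; apply: perm_big; apply: uniq_perm.
- exact: divisors_uniq.
- by rewrite filter_uniq ?divisors_uniq.
move=> e; rewrite mem_filter -!dvdn_divisors //.
by apply/idP/andP => [ed | [] //]; split=> //; apply: dvdn_trans dn.
Qed.

Lemma sum_multiples_in_divisors (e : nat) (F : nat -> V) : (e %| n)%N ->
  \sum_(d <- divisors n | (e %| d)%N) F d = \sum_(k <- divisors (n %/ e)) F (e * k)%N.
Proof.
move=> en; have e_gt0 : (0 < e)%N := dvdn_gt0 n_gt0 en.
have ne_gt0 : (0 < n %/ e)%N := divisor_compl_gt0 n_gt0 en.
rewrite -big_filter -(big_map (muln e) xpredT); apply: perm_big; apply: uniq_perm.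
- by rewrite filter_uniq ?divisors_uniq.
- by rewrite map_inj_uniq ?divisors_uniq //; move=> x y /(congr1 (divn^~ e)) /=; rewrite !mulKn.
move=> d; rewrite mem_filter -dvdn_divisors //; apply/andP/mapP => [[ed dn] | [k]].
  exists (d %/ e)%N; last by rewrite mulnC divnK.
  by rewrite -dvdn_divisors // dvdn_divRL // divnK.
by rewrite -dvdn_divisors // dvdn_divRL // => kn ->; rewrite dvdn_mulr // mulnC.
Qed.

Lemma sum_divisors_exchange (F : nat -> nat -> V) :
  \sum_(d <- divisors n) \sum_(e <- divisors d) F e d
  = \sum_(e <- divisors n) \sum_(k <- divisors (n %/ e)) F e (e * k)%N.
Proof.
rewrite big_seq; under eq_bigr => d.
  by rewrite -dvdn_divisors // => dn; rewrite sum_divisors_of_divisor //; over.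
rewrite -big_seq (exchange_big_dep xpredT) //= big_seq [RHS]big_seq.
by apply: eq_bigr => e; rewrite -dvdn_divisors // => en; rewrite sum_multiples_in_divisors.
Qed.

End DivisorSums.

Lemma eq_dconv (u u' v v' : nat -> rat) (n : nat) : (0 < n)%N ->
  (forall m, (0 < m)%N -> u m = u' m) -> (forall m, (0 < m)%N -> v m = v' m) ->
  dconv u v n = dconv u' v' n.
Proof.
move=> n_gt0 eq_u eq_v; apply: eq_big_seq => d; rewrite -dvdn_divisors // => dn.
have d_gt0 : (0 < d)%N := dvdn_gt0 n_gt0 dn.
by rewrite eq_u // eq_v // divisor_compl_gt0.
Qed.

Lemma dconvA (u v w : nat -> rat) (n : nat) : (0 < n)%N ->
  dconv (dconv u v) w n = dconv u (dconv v w) n.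
Proof.
move=> n_gt0; rewrite /dconv.
under eq_bigr do rewrite mulr_suml.
rewrite sum_divisors_exchange //; apply: eq_big_seq => e.
rewrite -dvdn_divisors // => en; have e_gt0 : (0 < e)%N := dvdn_gt0 n_gt0 en.
by rewrite mulr_sumr; apply: eq_bigr => k _; rewrite mulKn // divnMA mulrA.
Qed.

Lemma dconvZr (u v : nat -> rat) (c : rat) (n : nat) :
  dconv u (fun m => c * v m) n = c * dconv u v n.
Proof. by rewrite /dconv mulr_sumr; apply: eq_bigr => d _; rewrite mulrCA. Qed.

Lemma sigma_dconv (m : nat) : (0 < m)%N ->
  (sigma m)%:R = dconv one_fn (fun d => d%:R) m.
Proof.
move=> m_gt0; rewrite /sigma natr_sum /dconv /one_fn.
under [RHS]eq_bigr do rewrite mul1r.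
by rewrite (sum_divisors_compl m_gt0 (fun d => d%:R)).
Qed.

Definition log_deriv (n : nat) : rat := \sum_(p <- primes n) (logn p n)%:R / p%:R.

(* [L a] may be computed over any duplicate-free list containing the primes
   of [a], since the other terms vanish. *)
Lemma log_deriv_over (a : nat) (s : seq nat) : uniq s -> {subset primes a <= s} ->
  \sum_(p <- s) (logn p a)%:R / p%:R = log_deriv a.
Proof.
move=> s_uniq primes_in_s; apply: perm_big_supp; apply: uniq_perm.
- by rewrite filter_uniq.
- by rewrite filter_uniq ?primes_uniq.
move=> p; rewrite !mem_filter; case: eqP => //= /eqP term_ne0.
have : (0 < logn p a)%N by rewrite lt0n; apply: contraNneq term_ne0 => ->; rewrite mul0r.
by rewrite logn_gt0 => p_in_a; rewrite p_in_a primes_in_s.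
Qed.

Lemma log_derivM (a b : nat) : (0 < a)%N -> (0 < b)%N ->
  log_deriv (a * b) = log_deriv a + log_deriv b.
Proof.
move=> a_gt0 b_gt0; rewrite {1}/log_deriv.
under eq_bigr => p _ do rewrite lognM // natrD mulrDl.
rewrite big_split /= !log_deriv_over ?primes_uniq // => p p_in.
all: by rewrite primesM // p_in ?orbT.
Qed.

Lemma arith_derivE (n : nat) : (0 < n)%N -> (arith_deriv n)%:R = n%:R * log_deriv n.
Proof.
move=> n_gt0; rewrite /arith_deriv /log_deriv natr_sum mulr_sumr.
apply: eq_big_seq => p; rewrite mem_primes => /and3P[p_prime _ pn].
rewrite natrM natr_div // ?unitfE ?pnatr_eq0 -?lt0n ?prime_gt0 //.
by rewrite mulrCA mulrA.
Qed.

(* Pairing [d] with [m/d]: [2 sum_{d | m} L d = tau(m) L m]. *)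
Lemma sum_log_deriv_divisors (m : nat) : (0 < m)%N ->
  2 * \sum_(d <- divisors m) log_deriv d = (tau m)%:R * log_deriv m.
Proof.
move=> m_gt0.
have pair_compl : \sum_(d <- divisors m) (log_deriv d + log_deriv (m %/ d)%N)
                  = \sum_(d <- divisors m) log_deriv m.
  apply: eq_big_seq => d; rewrite -dvdn_divisors // => dm.
  have d_gt0 : (0 < d)%N := dvdn_gt0 m_gt0 dm.
  by rewrite -log_derivM ?divisor_compl_gt0 // mulnC divnK.
rewrite big_split /= sum_divisors_compl // in pair_compl.
rewrite mulr_natl mulr2n pair_compl big_const_seq count_predT iter_addr_0.
by rewrite mulr_natl.
Qed.

Lemma dconv_id_arith_deriv (m : nat) : (0 < m)%N ->
  dconv (fun d => d%:R) (fun d => (arith_deriv d)%:R) m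
  = 2^-1 * (tau m * arith_deriv m)%:R.
Proof.
move=> m_gt0.
have -> : dconv (fun d => d%:R) (fun d => (arith_deriv d)%:R) m
          = m%:R * \sum_(d <- divisors m) log_deriv d.
  rewrite -(sum_divisors_compl m_gt0 log_deriv) mulr_sumr.
  apply: eq_big_seq => e; rewrite -dvdn_divisors // => em.
  rewrite arith_derivE ?divisor_compl_gt0 // mulrA -natrM.
  by rewrite mulnC divnK.
rewrite natrM arith_derivE // [X in _ = _ * X]mulrCA -sum_log_deriv_divisors //.
by rewrite mulrCA mulKf ?pnatr_eq0.
Qed.

Theorem mainTheorem7 (n : nat) : (0 < n)%N ->
  dconv (fun m => (sigma m)%:R) (fun m => (arith_deriv m)%:R) n
  = 2^-1 * dconv one_fn (fun m => (tau m * arith_deriv m)%:R) n.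
Proof.
move=> n_gt0.
rewrite (eq_dconv (u' := dconv one_fn (fun d => d%:R))
                  (v' := fun m => (arith_deriv m)%:R) n_gt0 sigma_dconv) //.
rewrite dconvA // -dconvZr.
exact: eq_dconv n_gt0 _ dconv_id_arith_deriv.
Qed.
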